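(* Let $X$ be a real Hilbert space, $r>0$, and let $Z_1,Z_2\subset X$ be non-empty closed $r$-prox-regular sets with $d_H(Z_1,Z_2)<\infty$, and let $0<\delta\le r/2$. Then there exists a constant $C>0$ depending only on $r$ such that for all $y_1,y_2\in X$ with $\mathrm{dist}(y_i,Z_i)\le\delta$, $i=1,2$, $$|\zeta_1-\zeta_2|^2\le C\big(|y_1-y_2|^2+d_H^2(Z_1,Z_2)+d_H(Z_1,Z_2)\big),$$ where $\zeta_i\in Z_i$ is the unique vector in $Z_i$ with $|y_i-\zeta_i|=\mathrm{dist}(y_i,Z_i)$, $i=1,2$.
   Context: $X$ is a real Hilbert space with scalar product $\langle\cdot,\cdot\rangle$ and norm $|\cdot|$; $\mathrm{dist}(x,Z)=\inf_{z\in Z}|x-z|$; $d_H(Z,\hat Z)=\max\{\sup_{z\in Z}\mathrm{dist}(z,\hat Z),\sup_{\hat z\in\hat Z}\mathrm{dist}(\hat z,Z)\}$. A closed connected $Z\subset X$ is $r$-prox-regular if for every $y\in X$ with $\mathrm{dist}(y,Z)=d\in(0,r)$ there is $x\in Z$ with $\mathrm{dist}(x+\frac rd(y-x),Z)=\frac rd|y-x|=r$; for such sets every $y$ with $\mathrm{dist}(y,Z)<r$ has a unique nearest point $x\in Z$, and it satisfies $\langle y-x,x-z\rangle+\frac{|y-x|}{2r}|x-z|^2\ge0$ for all $z\in Z$. *)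

From HB Require Import structures.
From mathcomp Require Import all_boot all_order all_algebra.
From mathcomp Require Import all_classical all_reals all_analysis.
Set Implicit Arguments. Unset Strict Implicit. Unset Printing Implicit Defensive.
Import Order.TTheory GRing.Theory Num.Theory.
Import numFieldNormedType.Exports.
Local Open Scope classical_set_scope.
Local Open Scope ring_scope.

Definition is_inner_product (R : realType) (X : normedModType R)
  (ip : X -> X -> R) : Prop :=
  [/\ (forall x y, ip x y = ip y x),
      (forall a x y z, ip (a *: x + y) z = a * ip x z + ip y z) &
      (forall x, `|x| ^+ 2 = ip x x)].

Definition dist (R : realType) (X : normedModType R) (x : X) (Z : set X) : R :=
  inf [set `|x - z| | z in Z].

Definition hausdorff (R : realType) (X : normedModType R) (Z W : set X) : \bar R :=
  maxe (ereal_sup [set (dist z W)%:E | z in Z])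
       (ereal_sup [set (dist w Z)%:E | w in W]).

Definition prox_regular (R : realType) (X : normedModType R) (r : R) (Z : set X) : Prop :=
  [/\ closed Z, connected Z &
      forall y : X, let d := dist y Z in 0 < d -> d < r ->
        exists2 x, Z x &
          dist (x + (r / d) *: (y - x)) Z = (r / d) * `|y - x| /\
          (r / d) * `|y - x| = r].

From HB Require Import structures.
From mathcomp Require Import all_boot all_order all_algebra.
From mathcomp Require Import all_classical all_reals all_analysis.
From mathcomp Require Import ring lra.
Import Order.TTheory GRing.Theory Num.Theory.
Import numFieldNormedType.Exports.
Local Open Scope classical_set_scope.
Local Open Scope ring_scope.
Set Implicit Arguments. Unset Strict Implicit.

(* Prox-regularity at the nearest point zeta to y (an exterior touching ball
   of radius r) gives the hypomonotonicity inequality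
     0 <= 2 r <y - zeta, zeta - z> + |y - zeta| |zeta - z|^2   (z in Z).
   Apply it in Z1 at a point z1 within d_H + eps of zeta2, and in Z2 at a point
   z2 within d_H + eps of zeta1. Adding the two inequalities gives a quadratic
   inequality in |zeta1 - zeta2| with coefficients in |y1 - y2|, r and
   d_H + eps; then let eps go to 0. *)

Lemma ler_of_forall_addM (R : realFieldType) (x y M : R) : 0 <= M ->
  (forall e, 0 < e -> e <= 1 -> x <= y + e * M) -> x <= y.
Proof.
move=> M0 hxy; apply/ler_addgt0Pr => e e0.
have M1 : 0 < M + 1 by lra.
have t0 : 0 < Num.min (e / (M + 1)) 1 by rewrite lt_min ltr01 divr_gt0.
apply: (le_trans (hxy _ t0 _)); first by rewrite ge_min lexx orbT.
rewrite lerD2l.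
have tM : Num.min (e / (M + 1)) 1 * M <= e / (M + 1) * M.
  by rewrite ler_wpM2r // ge_min lexx.
apply: (le_trans tM); rewrite mulrAC ler_pdivrMr //; nra.
Qed.

Section Distance.
Variables (R : realType) (X : normedModType R).

Lemma dist_le (x z : X) (Z : set X) : Z z -> dist x Z <= `|x - z|.
Proof.
move=> Zz; apply: ge_inf; last by exists z.
by exists 0 => _ [w _ <-]; rewrite normr_ge0.
Qed.

Lemma dist_ge0 (x : X) (Z : set X) : Z !=set0 -> 0 <= dist x Z.
Proof.
move=> [z Zz]; apply: lb_le_inf; first by exists `|x - z|, z.
by move=> _ [w _ <-]; rewrite normr_ge0.
Qed.

Lemma dist_approx (x : X) (Z : set X) e : Z !=set0 -> 0 < e ->
  exists2 z, Z z & `|x - z| < dist x Z + e.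
Proof.
move=> [z0 Zz0] e0.
have [_ [z Zz <-] ?] : exists2 v, [set `|x - z| | z in Z] v & v < dist x Z + e.
  by apply: inf_lt; [exists `|x - z0|, z0 | rewrite ltrDl].
by exists z.
Qed.

Lemma hausdorffC (Z W : set X) : hausdorff Z W = hausdorff W Z.
Proof. by rewrite /hausdorff maxC. Qed.

Lemma dist_le_hausdorff (Z W : set X) (z : X) : Z z ->
  (hausdorff Z W < +oo)%E -> dist z W <= fine (hausdorff Z W).
Proof.
move=> Zz; have : ((dist z W)%:E <= hausdorff Z W)%E.
  by rewrite le_max; apply/orP; left; apply: ereal_sup_ubound; exists z.
by case: (hausdorff Z W).
Qed.

End Distance.

Section InnerProduct.
Variables (R : realType) (X : normedModType R) (ip : X -> X -> R).
Hypothesis ip_inner : is_inner_product ip.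

Lemma ipC x y : ip x y = ip y x.
Proof. by case: ip_inner. Qed.

Lemma ipDl x y z : ip (x + y) z = ip x z + ip y z.
Proof. by case: ip_inner => _ lin _; rewrite -[x]scale1r lin mul1r scale1r. Qed.

Lemma ip0l z : ip 0 z = 0.
Proof. by have := ipDl 0 0 z; rewrite addr0 => h; lra. Qed.

Lemma ipZl a x z : ip (a *: x) z = a * ip x z.
Proof. by case: ip_inner => _ lin _; rewrite -[a *: x]addr0 lin ip0l addr0. Qed.

Lemma ipNl x z : ip (- x) z = - ip x z.
Proof. by rewrite -scaleN1r ipZl mulN1r. Qed.

Lemma ipBl x y z : ip (x - y) z = ip x z - ip y z.
Proof. by rewrite ipDl ipNl. Qed.

Lemma ipDr x y z : ip z (x + y) = ip z x + ip z y.
Proof. by rewrite ipC ipDl ipC [ip y z]ipC. Qed.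

Lemma ipNr x z : ip z (- x) = - ip z x.
Proof. by rewrite ipC ipNl ipC. Qed.

Lemma ipZr a x z : ip z (a *: x) = a * ip z x.
Proof. by rewrite ipC ipZl ipC. Qed.

Lemma ipnn x : ip x x = `|x| ^+ 2.
Proof. by case: ip_inner. Qed.

Lemma sqr_normD x y : `|x + y| ^+ 2 = `|x| ^+ 2 + 2 * ip x y + `|y| ^+ 2.
Proof. rewrite -!ipnn ipDl !ipDr [ip y x]ipC; lra. Qed.

Lemma ip_le_mul_norm x y : ip x y <= `|x| * `|y|.
Proof.
have [->|xn0] := eqVneq x 0; first by rewrite ip0l normr0 mul0r.
have [->|yn0] := eqVneq y 0; first by rewrite ipC ip0l normr0 mulr0.
have px : 0 < `|x| by rewrite normr_gt0.
have py : 0 < `|y| by rewrite normr_gt0.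
have := sqr_ge0 (`|(`|y| *: x - `|x| *: y)|).
rewrite sqr_normD ipNr ipZl ipZr !normrN !normrZ !ger0_norm // => h.
have : 0 <= 2 * (`|x| * `|y|) * (`|x| * `|y| - ip x y) by nra.
by rewrite pmulr_rge0 ?subr_ge0 //; nra.
Qed.

Lemma prox_regular_ball (r : R) (Z : set X) (y : X) :
  prox_regular r Z -> 0 < dist y Z -> dist y Z < r ->
  exists x, [/\ Z x, `|y - x| = dist y Z &
    forall z, Z z -> 0 <= 2 * r * ip (y - x) (x - z) + dist y Z * `|x - z| ^+ 2].
Proof.
move=> [_ _ PR] d0 dr; set d := dist y Z in d0 dr *.
have [x Zx [hball hr]] := PR y d0 dr; set t := r / d in hball hr.
have t0 : 0 < t by rewrite divr_gt0 // (lt_trans d0).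
have td : t * d = r by rewrite /t divfK // gt_eqF.
have yx : `|y - x| = d by apply: (mulfI (lt0r_neq0 t0)); rewrite hr td.
exists x; split=> // z Zz.
(* z lies outside the open ball of radius r centred at x + t (y - x) *)
have := dist_le (x + t *: (y - x)) Zz; rewrite hball hr addrAC => rz.
have {rz} : r ^+ 2 <= `|x - z + t *: (y - x)| ^+ 2.
  by rewrite ler_pXn2r ?nnegrE ?normr_ge0 ?(ltW (lt_trans d0 dr)).
rewrite sqr_normD normrZ (gtr0_norm t0) yx ipZr ipC -td exprMn => rz.
have : 0 <= d * (`|x - z| ^+ 2 + 2 * (t * ip (y - x) (x - z))).
  by rewrite mulr_ge0 ?(ltW d0) //; lra.
nra.
Qed.

Lemma eq_of_ball_ineq (r d : R) (y x zeta : X) : d < r ->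
  `|y - x| = d -> `|y - zeta| = d ->
  0 <= 2 * r * ip (y - x) (x - zeta) + d * `|x - zeta| ^+ 2 -> x = zeta.
Proof.
move=> dr yx yzeta ineq; apply/eqP; rewrite -subr_eq0 -normr_eq0.
have := sqr_normD (y - x) (x - zeta); rewrite addrA subrK yx yzeta => expand.
have {}expand : 2 * ip (y - x) (x - zeta) = - `|x - zeta| ^+ 2 by lra.
rewrite mulrAC expand in ineq.
rewrite -sqrf_eq0 eq_le sqr_ge0 andbT.
have : 0 <= (d - r) * `|x - zeta| ^+ 2 by lra.
by rewrite nmulr_rge0 // subr_lt0.
Qed.

Lemma prox_regular_normal_ineq (r : R) (Z : set X) (y zeta : X) :
  prox_regular r Z -> dist y Z < r -> Z zeta -> `|y - zeta| = dist y Z ->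
  forall z, Z z ->
    0 <= 2 * r * ip (y - zeta) (zeta - z) + `|y - zeta| * `|zeta - z| ^+ 2.
Proof.
move=> PR dr Zzeta yzeta z Zz.
have [d0|d0] := eqVneq (dist y Z) 0.
  move: yzeta; rewrite d0 => /normr0_eq0/subr0_eq ->.
  by rewrite subrr ip0l normr0 !mulr0 mul0r addr0.
have dpos : 0 < dist y Z by rewrite lt_neqAle eq_sym d0 dist_ge0 //; exists zeta.
have [x [Zx yx ball]] := prox_regular_ball PR dpos dr.
by rewrite -(eq_of_ball_ineq dr yx yzeta (ball _ Zzeta)) yx; apply: ball.
Qed.

Lemma normal_ineq_perturb (r h : R) (u w e : X) : 0 <= r ->
  `|u| <= r / 2 -> `|e| <= h ->
  0 <= 2 * r * ip u (w + e) + `|u| * `|w + e| ^+ 2 ->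
  0 <= 2 * r * ip u w + r ^+ 2 * h + r / 2 * (`|w| + h) ^+ 2.
Proof.
move=> r0 ur eh; rewrite ipDr => ineq.
have ue : ip u e <= r / 2 * h.
  by apply: le_trans (ip_le_mul_norm u e) _; apply: ler_pM.
have weh : `|w + e| <= `|w| + h.
  by apply: le_trans (ler_normD _ _) _; rewrite lerD2l.
have wer : `|u| * `|w + e| ^+ 2 <= r / 2 * (`|w| + h) ^+ 2.
  apply: ler_pM; rewrite ?sqr_ge0 //.
  by have := normr_ge0 (w + e); nra.
have : 2 * r * ip u e <= r ^+ 2 * h.
  have := ler_wpM2l (mulr_ge0 (ler0n _ 2) r0) ue.
  by rewrite [X in _ <= X -> _](_ : _ = r ^+ 2 * h) //; field.
lra.
Qed.

Lemma sqr_norm_le_of_normal_ineqs (r h : R) (y1 y2 zeta1 zeta2 z1 z2 : X) :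
  0 < r -> `|y1 - zeta1| <= r / 2 -> `|y2 - zeta2| <= r / 2 ->
  `|zeta2 - z1| <= h -> `|zeta1 - z2| <= h ->
  0 <= 2 * r * ip (y1 - zeta1) (zeta1 - z1) + `|y1 - zeta1| * `|zeta1 - z1| ^+ 2 ->
  0 <= 2 * r * ip (y2 - zeta2) (zeta2 - z2) + `|y2 - zeta2| * `|zeta2 - z2| ^+ 2 ->
  `|zeta1 - zeta2| ^+ 2 <= 8 * `|y1 - y2| ^+ 2 + 4 * r * h + 10 * h ^+ 2.
Proof.
move=> r0 y1r y2r z1h z2h ineq1 ineq2.
set a := zeta1 - zeta2; set A := `|a|; set D := `|y1 - y2|.
have {}ineq1 : 0 <= 2 * r * ip (y1 - zeta1) a + r ^+ 2 * h + r / 2 * (A + h) ^+ 2.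
  apply: normal_ineq_perturb (ltW r0) y1r z1h _.
  by rewrite /a addrA subrK.
have {}ineq2 : 0 <= 2 * r * ip (y2 - zeta2) (- a) + r ^+ 2 * h + r / 2 * (A + h) ^+ 2.
  have := normal_ineq_perturb (w := - a) (ltW r0) y2r z2h; rewrite normrN; apply.
  by rewrite /a opprB addrA subrK.
have ip_diff : ip (y1 - zeta1) a - ip (y2 - zeta2) a = ip (y1 - y2) a - A ^+ 2.
  rewrite /A -ipnn -!ipBl; congr (ip _ a).
  by rewrite /a !opprB addrACA [RHS]addrACA [- zeta1 + _]addrC.
have cs : ip (y1 - y2) a <= D * A := ip_le_mul_norm _ _.
rewrite ipNr in ineq2.
have sum : 0 <= r * (2 * (D * A - A ^+ 2) + 2 * r * h + (A + h) ^+ 2).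
  have : 2 * r * (ip (y1 - zeta1) a - ip (y2 - zeta2) a) <= 2 * r * (D * A - A ^+ 2).
    by rewrite ip_diff ler_wpM2l ?lerD2r // mulr_ge0 // ltW.
  lra.
rewrite pmulr_rge0 // in sum.
(* 2 D A <= A^2/4 + 4 D^2 and 2 A h <= A^2/4 + 4 h^2 *)
have := sqr_ge0 (A - 4 * D); have := sqr_ge0 (A - 4 * h); lra.
Qed.

Lemma sqr_norm_nearest_le (r h : R) (Z1 Z2 : set X) (y1 y2 zeta1 zeta2 : X) :
  prox_regular r Z1 -> prox_regular r Z2 ->
  0 < r -> dist y1 Z1 <= r / 2 -> dist y2 Z2 <= r / 2 ->
  Z1 zeta1 -> `|y1 - zeta1| = dist y1 Z1 ->
  Z2 zeta2 -> `|y2 - zeta2| = dist y2 Z2 ->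
  dist zeta2 Z1 <= h -> dist zeta1 Z2 <= h ->
  `|zeta1 - zeta2| ^+ 2 <= 8 * `|y1 - y2| ^+ 2 + 4 * r * h + 10 * h ^+ 2.
Proof.
move=> PR1 PR2 r0 y1r y2r Zzeta1 yzeta1 Zzeta2 yzeta2 h1 h2.
have h0 : 0 <= h by apply: le_trans h1; apply: dist_ge0; exists zeta1.
apply: (@ler_of_forall_addM _ _ _ (4 * r + 20 * h + 10)); first lra.
move=> e e0 e1.
have [z1 Zz1 z1e] := dist_approx zeta2 (ex_intro _ _ Zzeta1) e0.
have [z2 Zz2 z2e] := dist_approx zeta1 (ex_intro _ _ Zzeta2) e0.
have := sqr_norm_le_of_normal_ineqs (h := h + e) r0 _ _ _ _
  (prox_regular_normal_ineq PR1 _ Zzeta1 yzeta1 Zz1)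
  (prox_regular_normal_ineq PR2 _ Zzeta2 yzeta2 Zz2).
have : e ^+ 2 <= e by rewrite expr2 ler_piMr // ltW.
rewrite yzeta1 yzeta2; lra.
Qed.

End InnerProduct.

Theorem lemma4p3 (R : realType) (r : R) : 0 < r ->
  exists2 C : R, 0 < C &
  forall (X : completeNormedModType R) (ip : X -> X -> R),
    is_inner_product ip ->
  forall (Z1 Z2 : set X),
    Z1 !=set0 -> Z2 !=set0 ->
    prox_regular r Z1 -> prox_regular r Z2 ->
    (hausdorff Z1 Z2 < +oo)%E ->
  forall delta : R, 0 < delta -> delta <= r / 2 ->
  forall y1 y2 zeta1 zeta2 : X,
    dist y1 Z1 <= delta -> dist y2 Z2 <= delta ->
    Z1 zeta1 -> `|y1 - zeta1| = dist y1 Z1 ->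
    Z2 zeta2 -> `|y2 - zeta2| = dist y2 Z2 ->
    let dH := fine (hausdorff Z1 Z2) in
    `|zeta1 - zeta2| ^+ 2 <= C * (`|y1 - y2| ^+ 2 + dH ^+ 2 + dH).
Proof.
move=> r0; exists (10 + 4 * r); first lra.
move=> X ip ip_inner Z1 Z2 _ Z2n0 PR1 PR2 dH_fin delta _ delta_r
  y1 y2 zeta1 zeta2 y1_delta y2_delta Zzeta1 yzeta1 Zzeta2 yzeta2.
cbv zeta; set dH := fine _.
have dist2 : dist zeta2 Z1 <= dH.
  by rewrite /dH hausdorffC; apply: dist_le_hausdorff; rewrite // hausdorffC.
have dist1 : dist zeta1 Z2 <= dH := dist_le_hausdorff Zzeta1 dH_fin.
have dH0 : 0 <= dH := le_trans (dist_ge0 _ Z2n0) dist1.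
have := sqr_norm_nearest_le ip_inner PR1 PR2 r0 (le_trans y1_delta delta_r)
  (le_trans y2_delta delta_r) Zzeta1 yzeta1 Zzeta2 yzeta2 dist2 dist1.
have := mulr_ge0 (ltW r0) (sqr_ge0 `|y1 - y2|).
have := mulr_ge0 (ltW r0) (sqr_ge0 dH).
have := sqr_ge0 `|y1 - y2|; lra.
Qed.
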